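(* Let $c\ge1$, $d,n\in\mathbb N$ and $A_1,\dots,A_n\in\mathcal T_c(d)$. Then for all $1\le j\le i\le d$, $$|(A_1\cdots A_n)_{ij}|\le(cn)^{i-j}|(A_1\cdots A_n)_{jj}|.$$
   Context: $\mathcal T_c(d)$ denotes the set of real $d\times d$ lower triangular matrices $A=(a_{ij})$ such that (i) $|a_{11}|\ge|a_{22}|\ge\dots\ge|a_{dd}|>0$ and (ii) $|a_{ij}|\le c|a_{jj}|$ for all $1\le i,j\le d$. *)

From HB Require Import structures.
From mathcomp Require Import all_boot all_order all_algebra.
Set Implicit Arguments. Unset Strict Implicit. Unset Printing Implicit Defensive.
Import Order.TTheory GRing.Theory Num.Theory.
Local Open Scope ring_scope.

(* T_c(d): real d x d lower triangular matrices A = (a_ij) with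
   (i) |a_11| >= |a_22| >= ... >= |a_dd| > 0 and
   (ii) |a_ij| <= c |a_jj| for all i, j.  Indices are 0-based ('I_d). *)
Definition in_Tc (R : realFieldType) (c : R) (d : nat) (A : 'M[R]_d) : Prop :=
  (forall i j : 'I_d, (i < j)%N -> A i j = 0) /\
  (forall i j : 'I_d, (i <= j)%N -> `|A j j| <= `|A i i|) /\
  (forall i : 'I_d, 0 < `|A i i|) /\
  (forall i j : 'I_d, `|A i j| <= c * `|A j j|).

Definition mxprod (R : realFieldType) (d n : nat) (A : nat -> 'M[R]_d) : 'M[R]_d :=
  foldr (fun k M => A k *m M) 1%:M (iota 0 n).

From HB Require Import structures.
From mathcomp Require Import all_boot all_order all_algebra ring.
Set Implicit Arguments. Unset Strict Implicit. Unset Printing Implicit Defensive.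
Import Order.TTheory GRing.Theory Num.Theory.
Local Open Scope ring_scope.

(* Call a lower triangular matrix Q "x-dominated" when every
   entry below the diagonal satisfies |Q_ij| <= x^(i-j) |Q_jj|.  The identity
   is 0-dominated, and the key step shows: if A is in T_c(d) and Q is lower
   triangular and x-dominated, then A Q is (x + c)-dominated.  Indeed
   (A Q)_ij = A_ii Q_ij + sum_(j <= l < i) A_il Q_lj, where
   |A_ii| <= |A_jj| and |A_il| <= c |A_ll| <= c |A_jj| (diagonal decreasing),
   so |(A Q)_ij| <= (x^(i-j) + c sum_(k < i-j) x^k) |A_jj Q_jj|, and the
   bracket is at most (x + c)^(i-j) while A_jj Q_jj = (A Q)_jj.
   Peeling off one factor at a time, A_1 ... A_n is therefore
   (c n)-dominated, which is the statement. *)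

Section LowerTriangular.
Variables (R : pzSemiRingType) (d : nat).
Implicit Types (A B : 'M[R]_d) (i j : 'I_d).

Lemma mulmx_trig A B : is_trig_mx A -> is_trig_mx B -> is_trig_mx (A *m B).
Proof.
move=> /is_trig_mxP A_trig /is_trig_mxP B_trig; apply/is_trig_mxP => i j lt_ij.
rewrite mxE big1 // => l _; have [le_li|lt_il] := leqP l i.
  by rewrite B_trig ?mulr0 // (leq_ltn_trans le_li lt_ij).
by rewrite A_trig ?mul0r.
Qed.

Lemma mulmx_trig_entry A B i j : is_trig_mx A -> is_trig_mx B ->
  (A *m B) i j = A i i * B i j + \sum_(l < d | (j <= l < i)%N) A i l * B l j.
Proof.
move=> /is_trig_mxP A_trig /is_trig_mxP B_trig.
rewrite mxE (bigD1 i) //=; congr (_ + _).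
rewrite big_mkcond [RHS]big_mkcond; apply: eq_bigr => l _ /=.
have [le_jl|lt_lj] := leqP j l; last by rewrite B_trig // mulr0 if_same.
rewrite ltn_neqAle -val_eqE; case: eqP => //= _.
by case: leqP => // lt_il; rewrite A_trig ?mul0r.
Qed.

Lemma mulmx_trig_diag A B j : is_trig_mx A -> is_trig_mx B ->
  (A *m B) j j = A j j * B j j.
Proof.
move=> A_trig B_trig; rewrite mulmx_trig_entry // big_pred0 ?addr0 // => l.
by case: leqP => // /leq_ltn_trans h; apply/negbTE; rewrite -leqNgt.
Qed.

End LowerTriangular.

Lemma sum_ord_interval (M : nmodType) (d i j : nat) (F : nat -> M) :
  (i <= d)%N ->
  \sum_(l < d | (j <= l < i)%N) F (l - j)%N = \sum_(k < i - j) F k.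
Proof.
move=> le_id.
rewrite -(big_ord_widen_cond _ (leq j) (fun l => F (l - j)%N)) //.
rewrite (eq_bigl (fun l : 'I_i => xpredT l && (j <= l)%N)) //.
rewrite -(big_geq_mkord j i xpredT (fun l => F (l - j)%N)) -{1}[j]add0n big_addn big_mkord.
by apply: eq_bigr => k _; rewrite addnK.
Qed.

Lemma geom_ineq (R : realDomainType) (x c : R) (m : nat) :
  0 <= x -> 1 <= c ->
  x ^+ m + c * \sum_(k < m) x ^+ k <= (x + c) ^+ m.
Proof.
move=> x_ge0 c_ge1; have c_ge0 : 0 <= c := le_trans ler01 c_ge1.
have xc_ge1 : 1 <= x + c by rewrite -[1]add0r lerD.
elim: m => [|m IH]; first by rewrite big_ord0 mulr0 addr0.
have sum_rec : \sum_(k < m.+1) x ^+ k = 1 + x * \sum_(k < m) x ^+ k.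
  by rewrite big_ord_recl expr0 mulr_sumr; congr (_ + _); apply: eq_bigr => k _; rewrite exprS.
rewrite sum_rec mulrDr mulr1 exprS [(x + c) ^+ m.+1]exprS mulrDl.
rewrite addrCA mulrCA -mulrDr [c + _]addrC lerD //; first by rewrite ler_wpM2l.
by rewrite -[leLHS]mulr1 ler_wpM2l // exprn_ege1.
Qed.

Section Domination.
Variables (R : realFieldType) (d : nat).

Definition dominated (x : R) (Q : 'M[R]_d) : Prop :=
  forall i j : 'I_d, (j <= i)%N -> `|Q i j| <= x ^+ (i - j) * `|Q j j|.

Lemma Tc_trig (c : R) (A : 'M[R]_d) : in_Tc c A -> is_trig_mx A.
Proof. by move=> [A_trig _]; apply/is_trig_mxP. Qed.

Lemma dominated_id (x : R) : 0 <= x -> dominated x 1%:M.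
Proof.
move=> x_ge0 i j le_ji; rewrite !mxE eqxx.
have [->|ne_ij] := eqVneq i j; first by rewrite subnn expr0 mul1r.
by rewrite normr0 normr1 mulr1 exprn_ge0.
Qed.

Lemma Tc_mul_dominated (c x : R) (A Q : 'M[R]_d) :
  1 <= c -> 0 <= x -> in_Tc c A -> is_trig_mx Q -> dominated x Q ->
  dominated (x + c) (A *m Q).
Proof.
move=> c_ge1 x_ge0 A_Tc Q_trig Q_dom i j le_ji.
have A_trig := Tc_trig A_Tc; have [_ [A_diag [_ A_col]]] := A_Tc.
have c_ge0 : 0 <= c := le_trans ler01 c_ge1.
set K := `|A j j| * `|Q j j|.
have K_ge0 : 0 <= K by rewrite mulr_ge0.
have diag_term : `|A i i * Q i j| <= x ^+ (i - j) * K.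
  by rewrite normrM mulrCA; apply: ler_pM => //; [apply: A_diag | apply: Q_dom].
have off_term (l : 'I_d) : (j <= l < i)%N -> `|A i l * Q l j| <= c * K * x ^+ (l - j).
  case/andP=> le_jl _.
  have -> : c * K * x ^+ (l - j) = c * `|A j j| * (x ^+ (l - j) * `|Q j j|).
    by rewrite /K; ring.
  rewrite normrM; apply: ler_pM => //.
    by apply: le_trans (A_col i l) _; rewrite ler_wpM2l ?A_diag.
  exact: Q_dom.
have off_sum : `|\sum_(l < d | (j <= l < i)%N) A i l * Q l j|
                <= c * K * \sum_(k < i - j) x ^+ k.
  apply: le_trans (ler_norm_sum _ _ _) _; apply: le_trans (ler_sum _ off_term) _.
  by rewrite -mulr_sumr (@sum_ord_interval _ d i j (fun k => x ^+ k)) // ltnW.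
rewrite mulmx_trig_diag // normrM -/K mulmx_trig_entry //.
apply: le_trans (ler_normD _ _) _; apply: le_trans (lerD diag_term off_sum) _.
by rewrite mulrAC -mulrDl ler_wpM2r // geom_ineq.
Qed.

End Domination.

Lemma mxprodS (R : realFieldType) (d n : nat) (A : nat -> 'M[R]_d) :
  mxprod n.+1 A = A 0%N *m mxprod n (fun k => A k.+1).
Proof. by rewrite /mxprod /= -[1%N]addn0 iotaDl foldr_map. Qed.

Lemma mxprod_Tc (R : realFieldType) (c : R) (d n : nat) (A : nat -> 'M[R]_d) :
  1 <= c -> (forall k, (k < n)%N -> in_Tc c (A k)) ->
  is_trig_mx (mxprod n A) /\ dominated (c * n%:R) (mxprod n A).
Proof.
move=> c_ge1; have c_ge0 : 0 <= c := le_trans ler01 c_ge1.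
elim: n A => [|n IH] A A_Tc.
  by rewrite mulr0; split; [exact: scalar_mx_is_trig | exact: dominated_id].
have [Q_trig Q_dom] := IH (fun k => A k.+1) (fun k lt_kn => A_Tc k.+1 lt_kn).
rewrite mxprodS mulrSr mulrDr mulr1; split.
  by apply: mulmx_trig Q_trig; apply: Tc_trig (A_Tc 0%N _).
by apply: Tc_mul_dominated => //; [rewrite mulr_ge0 | exact: A_Tc].
Qed.

Theorem lemma4p4 (R : realFieldType) (c : R) (d n : nat) (A : nat -> 'M[R]_d) :
  1 <= c ->
  (forall k, (k < n)%N -> in_Tc c (A k)) ->
  forall i j : 'I_d, (j <= i)%N ->
    `|mxprod n A i j| <= (c * n%:R) ^+ (i - j) * `|mxprod n A j j|.
Proof. by move=> c_ge1 A_Tc; have [_ P_dom] := mxprod_Tc c_ge1 A_Tc. Qed.
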